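(* Let $a,\alpha\in\mathbb R$, $\Delta t>0$, $h_x,h_y>0$ and $N_x,N_y\ge1$. Grid functions are arrays $(f_{ij})_{1\le i\le N_x,1\le j\le N_y}$ (values at cell centers $((i-\tfrac12)h_x,(j-\tfrac12)h_y)$), with discrete inner product $\langle f,g\rangle=h_xh_y\sum_{i,j}f_{ij}g_{ij}$. Let $\nabla_h^2=\Delta_h$ be the cell-centered discrete Laplacian with homogeneous Neumann boundary conditions, $$(\Delta_h\phi)_{ij}=\frac{\phi_{i+1,j}-2\phi_{ij}+\phi_{i-1,j}}{h_x^2}+\frac{\phi_{i,j+1}-2\phi_{ij}+\phi_{i,j-1}}{h_y^2},$$ with ghost values $\phi_{0,j}=\phi_{1,j}$, $\phi_{N_x+1,j}=\phi_{N_x,j}$, $\phi_{i,0}=\phi_{i,1}$, $\phi_{i,N_y+1}=\phi_{i,N_y}$, and let $\nabla_h^4=\Delta_h\Delta_h$. Let $n\ge1$ and let grid functions $\phi^{n-1},\phi^n,q^{n-1},q^n$ and a grid function $\bar M^{n+1/2}$ with $\langle\bar M^{n+1/2},1\rangle\ne0$ be given; set $\bar{q'}^{\,n+1/2}=\tfrac32(2\phi^n)-\tfrac12(2\phi^{n-1})$ (pointwise). Suppose grid functions $\phi^{n+1},q^{n+1}$ satisfy $$\phi^{n+1}-\phi^n=-\Delta t\,\bar M^{n+1/2}\big(\mu^{n+1/2}-L^{n+1/2}\big),\qquad q^{n+1}-q^n=\bar{q'}^{\,n+1/2}(\phi^{n+1}-\phi^n),$$ (products of grid functions taken pointwise), where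 $(\bullet)^{n+1/2}=\tfrac12[(\bullet)^{n+1}+(\bullet)^n]$, $$\mu^{n+1/2}=(\nabla_h^4\phi+2a\nabla_h^2\phi+\alpha\phi)^{n+1/2}+\tfrac12q^{n+1/2}\bar{q'}^{\,n+1/2},\qquad L^{n+1/2}=\frac{\langle\bar M^{n+1/2},\mu^{n+1/2}\rangle}{\langle\bar M^{n+1/2},1\rangle}.$$ Define the discrete energy $F^k=\big\langle\tfrac{\phi^k}{2}(\nabla_h^4+2a\nabla_h^2+\alpha)\phi^k+\tfrac{(q^k)^2}{4},1\big\rangle$. Then $$F^{n+1}-F^n=-\Delta t\,\big\langle\mu^{n+1/2}-L^{n+1/2},\,\bar M^{n+1/2}(\mu^{n+1/2}-L^{n+1/2})\big\rangle.$$
   Context: This is the fully discrete (finite-difference in space, linear Crank–Nicolson/extrapolation in time, energy quadratization $q=\phi^2$, $q'=2\phi$) scheme for the Allen–Cahn equation with a Lagrange multiplier enforcing mass conservation, for the phase-field crystal free energy $\int[\tfrac12|\nabla^2\phi|^2-a|\nabla\phi|^2+\tfrac\alpha2\phi^2+\tfrac14\phi^4]$. $\bar M^{n+1/2}$ represents the extrapolated mobility $\tfrac32M^n-\tfrac12M^{n-1}$. *)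

(* Grid functions on an Nx x Ny cell-centered grid are
   matrices 'M[R]_(Nx, Ny); entry (i, j) (0-based) is the value at cell
   ((i+1/2) hx, (j+1/2) hy). *)
From HB Require Import structures.
From mathcomp Require Import all_boot all_order all_algebra.
Set Implicit Arguments. Unset Strict Implicit. Unset Printing Implicit Defensive.
Import Order.TTheory GRing.Theory Num.Theory.
Local Open Scope ring_scope.

Section Grid.
Variable R : realFieldType.
Variables Nx Ny : nat.
Notation grid := 'M[R]_(Nx, Ny).

(* neighbour index with homogeneous Neumann ghost values:
   next of the last index is itself, prev of the first index is itself *)
Definition nextI (N : nat) (i : 'I_N) : 'I_N := insubd i i.+1.
Definition prevI (N : nat) (i : 'I_N) : 'I_N := insubd i i.-1.

Definition gip (hx hy : R) (f g : grid) : R :=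
  hx * hy * \sum_(i < Nx) \sum_(j < Ny) f i j * g i j.

Definition gmul (f g : grid) : grid := \matrix_(i, j) (f i j * g i j).

Definition gconst (c : R) : grid := const_mx c.

Definition lap_h (hx hy : R) (f : grid) : grid :=
  \matrix_(i, j)
    ((f (nextI i) j - 2 * f i j + f (prevI i) j) / hx ^+ 2
   + (f i (nextI j) - 2 * f i j + f i (prevI j)) / hy ^+ 2).

Definition bilap_h (hx hy : R) (f : grid) : grid := lap_h hx hy (lap_h hx hy f).

Definition pfc_op (a alpha hx hy : R) (f : grid) : grid :=
  bilap_h hx hy f + (2 * a) *: lap_h hx hy f + alpha *: f.

Definition energy (a alpha hx hy : R) (phi q : grid) : R :=
  gip hx hy (\matrix_(i, j) (phi i j / 2 * pfc_op a alpha hx hy phi i j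
                            + (q i j) ^+ 2 / 4)) (gconst 1).

End Grid.

(* The operator nabla_h^4 + 2 a nabla_h^2 + alpha is self-adjoint for the
   discrete inner product, since summation by parts holds exactly for the
   Neumann Laplacian. Hence the quadratic part of F^(n+1) - F^n equals
   <phi^(n+1) - phi^n, (nabla_h^4 + 2 a nabla_h^2 + alpha) phi^(n+1/2)>, while
   the update rule for q turns ((q^(n+1))^2 - (q^n)^2) / 4 into
   <phi^(n+1) - phi^n, q^(n+1/2) qbar' / 2>, so that
   F^(n+1) - F^n = <phi^(n+1) - phi^n, mu^(n+1/2)>. Substituting the scheme for
   phi^(n+1) - phi^n and using <Mbar, mu - L> = 0, which is how L is chosen,
   gives the dissipation identity. *)
From HB Require Import structures.
From mathcomp Require Import all_boot all_order all_algebra.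
From mathcomp Require Import ring.
Import Order.TTheory GRing.Theory Num.Theory.
Local Open Scope ring_scope.
Set Implicit Arguments. Unset Strict Implicit. Unset Printing Implicit Defensive.

Lemma nextI_widen n (i : 'I_n) : nextI (widen_ord (leqnSn n) i) = lift ord0 i.
Proof. by apply: val_inj; rewrite /nextI val_insubd /= ltnS ltn_ord. Qed.

Lemma nextI_max n : nextI (@ord_max n) = ord_max.
Proof. by apply: val_inj; rewrite /nextI val_insubd /= ltnn. Qed.

Lemma prevI_lift0 n (i : 'I_n) : prevI (lift ord0 i) = widen_ord (leqnSn n) i.
Proof.
by apply: val_inj; rewrite /prevI val_insubd /= /bump leq0n /= add0n ltnS ltnW.
Qed.

Lemma prevI0 n : prevI (@ord0 n) = ord0.
Proof. by apply: val_inj; rewrite /prevI val_insubd. Qed.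

Section NeumannSums.
Variables (R : comPzRingType) (n : nat) (F G : 'I_n.+1 -> R).

Lemma sum_mul_nextI : \sum_i F i * G (nextI i) =
  \sum_(i < n) F (widen_ord (leqnSn n) i) * G (lift ord0 i) + F ord_max * G ord_max.
Proof. by rewrite big_ord_recr nextI_max; under eq_bigr do rewrite nextI_widen. Qed.

Lemma sum_mul_prevI : \sum_i F i * G (prevI i) =
  F ord0 * G ord0 + \sum_(i < n) F (lift ord0 i) * G (widen_ord (leqnSn n) i).
Proof. by rewrite big_ord_recl prevI0; under eq_bigr do rewrite prevI_lift0. Qed.

End NeumannSums.

(* Both sides pair every interior edge (i, i+1) once in each direction; the
   Neumann ghost values only add the symmetric terms F 0 G 0 and F max G max. *)
Lemma sum_mul_neighboursC (R : comPzRingType) N (F G : 'I_N -> R) :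
  \sum_i F i * (G (nextI i) + G (prevI i)) =
  \sum_i G i * (F (nextI i) + F (prevI i)).
Proof.
case: N F G => [|n] F G; first by rewrite !big_ord0.
under eq_bigr do rewrite mulrDr.
under [RHS]eq_bigr do rewrite mulrDr.
rewrite !big_split /= !sum_mul_nextI !sum_mul_prevI.
under [in RHS]eq_bigr do rewrite mulrC.
under [X in _ = _ + (_ + X)]eq_bigr do rewrite mulrC.
rewrite (mulrC (G ord0)) (mulrC (G ord_max)).
by ring.
Qed.

Lemma sum_mul_second_diffC (R : comUnitRingType) N (F G : 'I_N -> R) (c : R) :
  \sum_i F i * ((G (nextI i) - 2 * G i + G (prevI i)) / c) =
  \sum_i G i * ((F (nextI i) - 2 * F i + F (prevI i)) / c).
Proof.
have expand (F1 G1 : 'I_N -> R) :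
    \sum_i F1 i * ((G1 (nextI i) - 2 * G1 i + G1 (prevI i)) / c) =
    (\sum_i F1 i * (G1 (nextI i) + G1 (prevI i)) - 2 * \sum_i F1 i * G1 i) / c.
  rewrite mulr_sumr -sumrB mulr_suml.
  by apply: eq_bigr => i _; ring.
rewrite !expand sum_mul_neighboursC.
by under [X in 2 * X]eq_bigr do rewrite mulrC.
Qed.

Section GridCalculus.
Variables (R : realFieldType) (Nx Ny : nat) (a alpha hx hy : R).
Local Notation grid := 'M[R]_(Nx, Ny).
Local Notation gip := (gip hx hy).
Local Notation lap := (lap_h hx hy).
Local Notation A := (pfc_op a alpha hx hy).
Local Notation gconst := (gconst Nx Ny).

Lemma gipC (f g : grid) : gip f g = gip g f.
Proof.
rewrite /gip; congr (_ * _); apply: eq_bigr => i _.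
by apply: eq_bigr => j _; rewrite mulrC.
Qed.

Lemma gipDr (f g k : grid) : gip f (g + k) = gip f g + gip f k.
Proof.
rewrite /gip -mulrDr -big_split; congr (_ * _); apply: eq_bigr => i _.
by rewrite -big_split; apply: eq_bigr => j _; rewrite mxE mulrDr.
Qed.

Lemma gipZr (f g : grid) (c : R) : gip f (c *: g) = c * gip f g.
Proof.
rewrite /gip [RHS]mulrCA; congr (_ * _); rewrite mulr_sumr; apply: eq_bigr => i _.
by rewrite mulr_sumr; apply: eq_bigr => j _; rewrite mxE mulrCA.
Qed.

Lemma gipNr (f g : grid) : gip f (- g) = - gip f g.
Proof. by rewrite -scaleN1r gipZr mulN1r. Qed.

Lemma gipBr (f g k : grid) : gip f (g - k) = gip f g - gip f k.
Proof. by rewrite gipDr gipNr. Qed.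

Lemma gip_gmul (f g k : grid) : gip (gmul f g) k = gip g (gmul f k).
Proof.
rewrite /gip; congr (_ * _); apply: eq_bigr => i _; apply: eq_bigr => j _.
by rewrite !mxE mulrCA mulrA.
Qed.

Lemma gmulC (f g : grid) : gmul f g = gmul g f.
Proof. by apply/matrixP => i j; rewrite !mxE mulrC. Qed.

Lemma gmulZl (c : R) (f g : grid) : gmul (c *: f) g = c *: gmul f g.
Proof. by apply/matrixP => i j; rewrite !mxE mulrA. Qed.

Lemma gip_gmul_const (f g : grid) (c : R) : gip (gmul f g) (gconst c) = c * gip f g.
Proof.
rewrite /gip mulrCA; congr (_ * _); rewrite mulr_sumr; apply: eq_bigr => i _.
by rewrite mulr_sumr; apply: eq_bigr => j _; rewrite !mxE mulrC.
Qed.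

Lemma gip_const (f : grid) (c : R) : gip f (gconst c) = c * gip f (gconst 1).
Proof. by rewrite -gipZr /gconst scalemx_const mulr1. Qed.

Lemma gip_sub_weighted_mean (M mu : grid) :
  gip M (gconst 1) != 0 -> gip M (mu - gconst (gip M mu / gip M (gconst 1))) = 0.
Proof. by move=> nzM; rewrite gipBr gip_const divfK // subrr. Qed.

Lemma lap_hD (f g : grid) : lap (f + g) = lap f + lap g.
Proof. by apply/matrixP => i j; rewrite !mxE; ring. Qed.

Lemma lap_hZ (c : R) (f : grid) : lap (c *: f) = c *: lap f.
Proof. by apply/matrixP => i j; rewrite !mxE; ring. Qed.

Lemma pfc_opD (f g : grid) : A (f + g) = A f + A g.
Proof.
rewrite /pfc_op /bilap_h !lap_hD !scalerDr.
by rewrite -addrA [X in _ + X = _]addrACA [LHS]addrACA !addrA.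
Qed.

Lemma pfc_opZ (c : R) (f : grid) : A (c *: f) = c *: A f.
Proof. by rewrite /pfc_op /bilap_h !lap_hZ !scalerDr !scalerA !(mulrC c). Qed.

Lemma lap_h_selfadjoint (f g : grid) : gip f (lap g) = gip (lap f) g.
Proof.
have splitE (F G : grid) : \sum_i \sum_j F i j * lap G i j =
    \sum_j \sum_i F i j * ((G (nextI i) j - 2 * G i j + G (prevI i) j) / hx ^+ 2)
  + \sum_i \sum_j F i j * ((G i (nextI j) - 2 * G i j + G i (prevI j)) / hy ^+ 2).
  rewrite [in RHS]exchange_big -big_split; apply: eq_bigr => i _.
  by rewrite -big_split; apply: eq_bigr => j _; rewrite mxE mulrDr.
rewrite /gip; congr (_ * _).
under [RHS]eq_bigr do under eq_bigr do rewrite mulrC.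
rewrite !splitE; congr (_ + _); apply: eq_bigr => k _; exact: sum_mul_second_diffC.
Qed.

Lemma pfc_op_selfadjoint (f g : grid) : gip f (A g) = gip (A f) g.
Proof.
rewrite /pfc_op /bilap_h !gipDr !gipZr ![gip (_ + _) g]gipC !gipDr !gipZr.
by rewrite !(gipC g) !lap_h_selfadjoint.
Qed.

Lemma gip_selfadjoint_subsq (T : grid -> grid) :
  {morph T : f g / f + g} -> (forall f g, gip f (T g) = gip (T f) g) ->
  forall f g, gip f (T f) - gip g (T g) = gip (f - g) (T (f + g)).
Proof.
move=> TD Tadj f g.
rewrite TD gipDr ![gip (f - g) _]gipC !gipBr -(Tadj g f).
by rewrite !(gipC (T _)) addrA subrK.
Qed.

Lemma energyE (p q : grid) :
  energy a alpha hx hy p q = gip p (A p) / 2 + gip q q / 4.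
Proof.
rewrite /energy /gip -!(mulrA (hx * hy)) -mulrDr; congr (_ * _).
rewrite !mulr_suml -big_split; apply: eq_bigr => i _.
rewrite !mulr_suml -big_split; apply: eq_bigr => j _.
by rewrite [X in X * _]mxE [X in _ * X]mxE mulr1 mulrAC expr2.
Qed.

Lemma energy_increment (p1 p0 q1 q0 r : grid) :
  q1 - q0 = gmul r (p1 - p0) ->
  energy a alpha hx hy p1 q1 - energy a alpha hx hy p0 q0 =
  gip (p1 - p0) (A ((1 / 2) *: (p1 + p0)) + (1 / 2) *: gmul ((1 / 2) *: (q1 + q0)) r).
Proof.
move=> dq.
have dquad := gip_selfadjoint_subsq pfc_opD pfc_op_selfadjoint p1 p0.
have dsq : gip q1 q1 - gip q0 q0 = gip (p1 - p0) (gmul r (q1 + q0)).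
  by rewrite (gip_selfadjoint_subsq (T := id)) // dq gip_gmul.
rewrite !energyE gipDr pfc_opZ gmulZl (gmulC _ r) !gipZr -dquad -dsq.
by field.
Qed.

End GridCalculus.

Theorem theorem4p3 (R : realFieldType) (Nx Ny : nat)
  (hNx : (1 <= Nx)%N) (hNy : (1 <= Ny)%N)
  (a alpha dt hx hy : R) (hdt : 0 < dt) (hhx : 0 < hx) (hhy : 0 < hy)
  (phi_prev phi_n q_prev q_n Mbar phi_next q_next : 'M[R]_(Nx, Ny)) :
  gip hx hy Mbar (gconst Nx Ny 1) != 0 ->
  let qbar := (3 / 2) *: (2 *: phi_n) - (1 / 2) *: (2 *: phi_prev) in
  let phi_half := (1 / 2) *: (phi_next + phi_n) in
  let q_half := (1 / 2) *: (q_next + q_n) in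
  let mu := pfc_op a alpha hx hy phi_half + (1 / 2) *: gmul q_half qbar in
  let L := gip hx hy Mbar mu / gip hx hy Mbar (gconst Nx Ny 1) in
  let w := mu - gconst Nx Ny L in
  phi_next - phi_n = - (dt *: gmul Mbar w) ->
  q_next - q_n = gmul qbar (phi_next - phi_n) ->
  energy a alpha hx hy phi_next q_next - energy a alpha hx hy phi_n q_n
    = - (dt * gip hx hy w (gmul Mbar w)).
Proof.
move=> nzM qbar phi_half q_half mu L w dphi dq.
have Mw0 : gip hx hy Mbar w = 0 := gip_sub_weighted_mean mu nzM.
have muE : mu = w + gconst Nx Ny L by rewrite /w subrK.
rewrite (energy_increment a alpha hx hy dq) -/phi_half -/q_half -/mu muE dphi.
rewrite gipC gipNr gipZr gipC gipDr gip_gmul_const Mw0 mulr0 addr0.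
by rewrite gip_gmul.
Qed.
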